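(* Let $q$ be an odd prime power and let $P(q^2)$ be the Paley graph on $\mathbb{F}_{q^2}$, with non-principal eigenvalues $\lambda_1=\frac{-1+q}{2}$ and $\lambda_2=\frac{-1-q}{2}$. For each $i\in\{1,2\}$, the minimum cardinality of the support of a $\lambda_i$-eigenfunction of $P(q^2)$ equals $q+1$. *)

From HB Require Import structures.
From mathcomp Require Import all_boot all_order all_algebra all_field.
From mathcomp Require Import reals.
Set Implicit Arguments. Unset Strict Implicit. Unset Printing Implicit Defensive.
Import Order.TTheory GRing.Theory Num.Theory.
Local Open Scope ring_scope.

Definition odd_prime_power (q : nat) : Prop :=
  exists p k : nat, [/\ prime p, odd p, (0 < k)%N & q = (p ^ k)%N].

Definition paley_adj (F : finFieldType) (x y : F) : bool :=
  (x != y) && [exists z : F, z ^+ 2 == x - y].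

Definition paley_eigenfunction (F : finFieldType) (R : realType) (lam : R)
    (f : F -> R) : Prop :=
  (exists x, f x != 0) /\
  (forall x : F, \sum_(y : F | paley_adj x y) f y = lam * f x).

Definition supp (F : finFieldType) (R : realType) (f : F -> R) : {set F} :=
  [set x | f x != 0].

From HB Require Import structures.
From mathcomp Require Import all_boot all_order all_algebra all_field.
From mathcomp Require Import cyclic reals.
From mathcomp Require Import ring lra zify.
Import Order.TTheory GRing.Theory Num.Theory.
Set Implicit Arguments. Unset Strict Implicit.
Local Open Scope ring_scope.

(* Write m = (q + 1) / 2 and e = (q - 1) m = (q^2 - 1) / 2, the degree of the
   graph; chi x = x ^ e is the quadratic character of F = F_(q^2), and by
   Euler's criterion x ~ y iff chi (x - y) = 1.  The non-principal eigenvalues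
   are m - 1 = (q - 1) / 2 and - m = (-1 - q) / 2.

   Lower bound (general graph theory): in a loopless graph, a nonzero
   lam-eigenfunction f with sum f = 0 has |supp f| > |lam| + |1 + lam|; take x
   maximising |f|, then the eigenvalue equation at x and the relation sum f = 0
   force |lam| neighbours and |1 + lam| non-neighbours of x into supp f.  On the
   Cayley graph P(q^2) every eigenvalue other than e gives sum f = 0, and
   |lam| + |1 + lam| = q for both eigenvalues.

   Construction: let K = F_q and U = {u | u ^ (q + 1) = 1} (the norm-one
   circle, of size q + 1), and sgnU the function u |-> u ^ m = +-1 on U, 0 off U.
   A line u + K s through a point u of U meets U in exactly one further point,
   whose sign is opposite when chi s * (-1) ^ m = -1; so sgnU sums to 0 along such
   lines.  Grouping the neighbours (or non-neighbours) of v into lines through v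
   turns this into the eigenvalue equation for x |-> sgnU (c x), whose
   eigenvalue is selected by the value of chi c, and whose support c^-1 U has
   q + 1 elements. *)

Lemma expf_card_pred (F : finFieldType) (x : F) : x != 0 -> x ^+ #|F|.-1 = 1.
Proof.
move=> nz; apply: (mulIf nz).
by rewrite mul1r -exprSr prednK ?expf_card // (ltn_trans _ (finNzRing_gt1 F)).
Qed.

Lemma finField_prim_root (F : finFieldType) :
  exists g : F, (#|F|.-1).-primitive_root g.
Proof.
pose rs := enum [pred x : F | x != 0].
have /hasP[g _ Hg] : has (#|F|.-1).-primitive_root rs.
  apply: has_prim_root; last by rewrite -cardE cardC1.
  - by rewrite -subn1 subn_gt0 finNzRing_gt1.
  - apply/allP => x; rewrite mem_enum inE => nz.
    by rewrite unity_rootE expf_card_pred.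
  - exact: enum_uniq.
by exists g.
Qed.

Lemma card_roots_of_unity (F : finFieldType) (d : nat) :
  (d %| #|F|.-1)%N -> (0 < d)%N -> #|[set x : F | x ^+ d == 1]| = d.
Proof.
move=> d_dvd d_gt0; have [g g_prim] := finField_prim_root F.
have h_prim := dvdn_prim_root g_prim d_dvd; set h := g ^+ _ in h_prim.
have -> : [set x : F | x ^+ d == 1] = [set h ^+ (val i) | i : 'I_d].
  apply/setP => x; rewrite inE; apply/idP/imsetP.
    by move/eqP/(prim_rootP h_prim) => [i ->]; exists i.
  by move=> [i _ ->]; rewrite exprAC (prim_expr_order h_prim) expr1n.
rewrite card_imset ?card_ord // => i j /eqP.
by rewrite (eq_prim_root_expr h_prim) !modn_small ?ltn_ord // => /eqP /val_inj.
Qed.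

Lemma sum_translates (R : nzRingType) (V : finZmodType) (S : {set V}) (f : V -> R) :
  \sum_v \sum_(s in S) f (v - s) = #|S|%:R * \sum_v f v.
Proof.
rewrite exchange_big /= mulr_natl -sumr_const; apply: eq_bigr => s _.
by rewrite [RHS](reindex_inj (addIr (- s))).
Qed.

Lemma cayley_eigenfunction_sum0 (R : numDomainType) (V : finZmodType)
    (S : {set V}) (f : V -> R) (lam : R) :
  (forall v, \sum_(s in S) f (v - s) = lam * f v) -> lam != #|S|%:R ->
  \sum_v f v = 0.
Proof.
move=> eig lam_neq.
have : lam * \sum_v f v = #|S|%:R * \sum_v f v.
  by rewrite mulr_sumr -sum_translates; apply: eq_bigr => v _; rewrite eig.
by move/eqP; rewrite -subr_eq0 -mulrBl mulf_eq0 subr_eq0 (negbTE lam_neq) => /eqP.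
Qed.

Lemma norm_sum_le_support (R : numDomainType) (T : finType) (f : T -> R)
    (P : pred T) (M : R) :
  (forall y, `|f y| <= M) ->
  `|\sum_(y | P y) f y| <= #|[set y | P y && (f y != 0)]|%:R * M.
Proof.
move=> f_le; rewrite (bigID (fun y => f y != 0)) /= [X in _ + X]big1; last first.
  by move=> y /andP [_ /negPn /eqP].
rewrite addr0 mulr_natl -sumr_const.
apply: le_trans (ler_norm_sum _ _ _) _.
rewrite (eq_bigl (fun y => y \in [set y | P y && (f y != 0)])); last first.
  by move=> y; rewrite inE.
by apply: ler_sum => y _.
Qed.

(* Support bound for eigenfunctions of a loopless graph: if f is a nonzero
   lam-eigenfunction with vanishing sum and x maximises |f|, then the eigenvalue
   equation at x needs |lam| neighbours of x in the support, and the equation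
   sum f = 0 needs |1 + lam| non-neighbours, so |supp f| > |lam| + |1 + lam|. *)
Lemma eigenfunction_support_bound (R : realDomainType) (T : finType)
    (adj : rel T) (f : T -> R) (lam : R) (n : nat) :
  irreflexive adj -> (exists x, f x != 0) ->
  (forall x, \sum_(y | adj x y) f y = lam * f x) -> \sum_y f y = 0 ->
  n%:R <= `|lam| + `|1 + lam| -> (n < #|[set x | f x != 0%R]|)%N.
Proof.
move=> adj_irr [x0 fx0] eig sum0 n_le.
have [x _ x_max] := @arg_maxP _ R T x0 xpredT (fun y => `|f y|) isT.
have f_le y : `|f y| <= `|f x| by exact: x_max.
have fx_gt0 : 0 < `|f x| by apply: lt_le_trans (f_le x0); rewrite normr_gt0.
set A1 := [set y | adj x y && (f y != 0)].
set A2 := [set y | ((y != x) && ~~ adj x y) && (f y != 0)].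
have A1_ge : `|lam| * `|f x| <= #|A1|%:R * `|f x|.
  by rewrite -normrM -eig; apply: norm_sum_le_support.
have nonadj_sum : \sum_(y | (y != x) && ~~ adj x y) f y = - ((1 + lam) * f x).
  move: sum0; rewrite (bigD1 x) //= (bigID (adj x)) /=.
  have adj_neq y : (y != x) && adj x y = adj x y.
    by case: (eqVneq y x) => [->|//]; rewrite adj_irr.
  by rewrite (eq_bigl _ _ adj_neq) eig mulrDl mul1r => sum0; lra.
have A2_ge : `|1 + lam| * `|f x| <= #|A2|%:R * `|f x|.
  by rewrite -normrM -normrN -nonadj_sum; apply: norm_sum_le_support.
have supp_ge : (#|A1| + #|A2| < #|[set y | f y != 0%R]|)%N.
  have sub : x |: (A1 :|: A2) \subset [set y | f y != 0].
    apply/subsetP => y; rewrite !inE -normr_gt0.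
    by case/orP=> [/eqP -> //|/orP[]/andP[_]]; rewrite normr_gt0.
  apply: leq_trans (subset_leq_card sub).
  rewrite cardsU1 !inE adj_irr eqxx /= cardsU.
  suff -> : A1 :&: A2 = set0 by rewrite cards0 subn0.
  by apply/setP => y; rewrite !inE; case: (adj x y); rewrite ?andbF.
have : n%:R * `|f x| <= (#|A1| + #|A2|)%:R * `|f x|.
  rewrite natrD mulrDl; apply: le_trans (lerD A1_ge A2_ge).
  by rewrite -mulrDl ler_pM2r.
by rewrite ler_pM2r // ler_nat => n_le'; exact: leq_ltn_trans n_le' supp_ge.
Qed.

Section PaleyField.
Variables (F : finFieldType) (q : nat).
Hypotheses (q_pp : odd_prime_power q) (cardF : #|F| = (q ^ 2)%N).

(* m = (q + 1) / 2, and e = (q - 1) m = (#|F| - 1) / 2 is the degree of P(q^2). *)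
Let m := (q.+1)./2.
Let e := (q.-1 * m)%N.

Lemma q_gt1 : (1 < q)%N.
Proof.
case: q_pp => p [k [p_pr _ k_gt0 ->]].
by rewrite (leq_trans (prime_gt1 p_pr)) // -{1}(expn1 p) leq_pexp2l // prime_gt0.
Qed.

Lemma q_gt0 : (0 < q)%N.
Proof. exact: ltnW q_gt1. Qed.

Lemma succq_double : q.+1 = (m * 2)%N.
Proof.
have q_odd : odd q by case: q_pp => p [k [_ p_odd _ ->]]; rewrite oddX p_odd orbT.
by rewrite muln2 /m -[LHS]odd_double_half /= q_odd.
Qed.

Lemma e_gt0 : (0 < e)%N.
Proof. by have := q_gt1; have := succq_double; rewrite /e; nia. Qed.

Lemma card_units : #|F|.-1 = (e * 2)%N.
Proof. by rewrite cardF /e -mulnA -succq_double; have := q_gt1; nia. Qed.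

Lemma pchar_F : exists p k, [/\ p \in [pchar F], odd p & q = (p ^ k)%N].
Proof.
case: q_pp => p [k [p_pr p_odd _ q_def]]; exists p, k; split=> //.
by apply: (card_finPcharP (n := (k * 2)%N)) => //; rewrite cardF q_def -expnM.
Qed.

Lemma frobD (x y : F) : (x + y) ^+ q = x ^+ q + y ^+ q.
Proof.
have [p [k [p_char _ ->]]] := pchar_F.
by apply: exprDn_pchar; rewrite pnatX (pnatE _ (pcharf_prime p_char)) p_char.
Qed.

Lemma frobN (x : F) : (- x) ^+ q = - x ^+ q.
Proof.
by apply/eqP; rewrite -subr_eq0 opprK addrC -frobD subrr expr0n (gtn_eqF q_gt0).
Qed.

Lemma frobK (x : F) : (x ^+ q) ^+ q = x.
Proof. by rewrite -exprM mulnn -cardF expf_card. Qed.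

Lemma one_neq_m1 : (1 : F) != -1.
Proof.
have [p [k [p_char p_odd _]]] := pchar_F.
apply/eqP => one_m1; have : (2%:R : F) == 0 by rewrite mulr2n {1}one_m1 addNr.
rewrite -(dvdn_pcharf p_char) => /dvdn_leq p_le2.
have p_gt1 := prime_gt1 (pcharf_prime p_char).
have p2 : p = 2%N by lia.
by rewrite p2 in p_odd.
Qed.

Local Notation chi x := (x ^+ e).

Lemma chi0 : chi (0 : F) = 0.
Proof. by rewrite expr0n gtn_eqF // e_gt0. Qed.

Lemma chi_sign (x : F) : x != 0 -> chi x = 1 \/ chi x = -1.
Proof.
move=> x_nz; have : chi x ^+ 2 == 1 by rewrite -exprM -card_units expf_card_pred.
by rewrite sqrf_eq1 => /orP[/eqP|/eqP]; [left|right].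
Qed.

Lemma euler_criterion (x : F) :
  (chi x == 1) = (x != 0) && [exists z, z ^+ 2 == x].
Proof.
apply/idP/andP => [chi_x|[x_nz /existsP [z /eqP x_def]]]; last first.
  rewrite -x_def -exprM mulnC -card_units expf_card_pred //.
  by apply: contraNneq x_nz => z0; rewrite -x_def z0 expr0n.
have x_nz : x != 0 by apply: contraTneq chi_x => ->; rewrite chi0 eq_sym oner_eq0.
split=> //; have [g g_prim] := finField_prim_root F.
have [[i _] /= x_def] := prim_rootP g_prim (expf_card_pred x_nz).
have : (#|F|.-1 %| i * e)%N by rewrite (prim_order_dvd g_prim) exprM -x_def.
rewrite card_units [(i * e)%N]mulnC dvdn_pmul2l ?e_gt0 // => /dvdnP [j i_def].
by apply/existsP; exists (g ^+ j); rewrite -exprM -i_def x_def.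
Qed.

Lemma paley_adjE (x y : F) : paley_adj x y = (chi (x - y) == 1).
Proof. by rewrite euler_criterion /paley_adj subr_eq0. Qed.

(* Both values of chi on F^* are taken; -1 is taken by a generator of F^*. *)
Lemma chi_onto (eps : F) : eps = 1 \/ eps = -1 -> exists2 c, c != 0 & chi c = eps.
Proof.
case=> ->; first by exists 1; rewrite ?oner_eq0 // expr1n.
have [g g_prim] := finField_prim_root F.
have g_nz : g != 0 by rewrite (prim_root_eq0 g_prim) card_units; have := e_gt0; lia.
exists g => //; case: (chi_sign g_nz) => // chi_g.
have : (#|F|.-1 %| e)%N by rewrite (prim_order_dvd g_prim) chi_g.
by rewrite card_units => /dvdn_leq; have := e_gt0; lia.
Qed.

Let Sq := [set s : F | chi s == 1].
Let NSq := [set s : F | (s != 0) && (chi s != 1)].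

Lemma card_Sq : #|Sq| = e.
Proof. by rewrite card_roots_of_unity ?e_gt0 // card_units dvdn_mulr. Qed.

Lemma card_NSq : #|NSq| = e.
Proof.
have -> : NSq = [set~ 0] :\: Sq.
  by apply/setP => s; rewrite !inE andbC.
rewrite cardsD (setIidPr _); last first.
  by apply/subsetP => s; rewrite !inE; apply: contraTneq => ->; rewrite chi0 eq_sym oner_eq0.
rewrite card_Sq cardsC1 card_units; lia.
Qed.

Lemma paley_nbr_sum (R : zmodType) (f : F -> R) (v : F) :
  \sum_(y | paley_adj v y) f y = \sum_(s in Sq) f (v - s).
Proof.
rewrite (reindex_inj (subrI v)) /=; apply: eq_bigl => s.
by rewrite paley_adjE subKr inE.
Qed.

Lemma sum_split_chi (R : zmodType) (f : F -> R) (v : F) :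
  \sum_s f (v - s) = f v + \sum_(s in Sq) f (v - s) + \sum_(s in NSq) f (v - s).
Proof.
rewrite (bigD1 0) //= subr0 -addrA; congr (_ + _).
rewrite (bigID (fun s => chi s == 1)) /=; congr (_ + _); apply: eq_bigl => s; rewrite inE //.
by case: eqVneq => [->|] //=; rewrite chi0 eq_sym oner_eq0.
Qed.

Let K := [set t : F | t ^+ q == t].

Lemma mem_K0 : (0 : F) \in K.
Proof. by rewrite inE expr0n (gtn_eqF q_gt0). Qed.

Lemma mem_Km1 : (-1 : F) \in K.
Proof. by rewrite inE frobN expr1n. Qed.

Lemma mem_KV (t : F) : t \in K -> t^-1 \in K.
Proof. by rewrite !inE exprVn => /eqP ->. Qed.

Lemma mem_KD (t t0 : F) : t0 \in K -> (t + t0 \in K) = (t \in K).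
Proof. by rewrite !inE frobD => /eqP ->; rewrite (inj_eq (addIr t0)). Qed.

Lemma card_K : #|K| = q.
Proof.
have q1_gt0 : (0 < q.-1)%N by have := q_gt1; lia.
have -> : K = 0 |: [set t : F | t ^+ q.-1 == 1].
  apply/setP => t; rewrite !inE; case: (eqVneq t 0) => [->|t_nz] /=.
    by have := mem_K0; rewrite inE => ->.
  rewrite -{1}(prednK q_gt0) exprSr -[X in _ == X]mul1r.
  by rewrite (inj_eq (mulIf t_nz)).
rewrite cardsU1 inE expr0n gtn_eqF //= eq_sym oner_eq0 /= card_roots_of_unity //.
  by have := q_gt1; lia.
by rewrite card_units /e -mulnA dvdn_mulr.
Qed.

Lemma chi_K (t : F) : t \in K -> t != 0 -> chi t = 1.
Proof.
rewrite inE => /eqP t_K t_nz.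
have t_q1 : t ^+ q.-1 = 1.
  by apply: (mulIf t_nz); rewrite -exprSr prednK ?t_K ?mul1r // q_gt0.
by rewrite exprM t_q1 expr1n.
Qed.

Let U := [set u : F | u ^+ q.+1 == 1].

Lemma card_U : #|U| = q.+1.
Proof.
by rewrite card_roots_of_unity // card_units succq_double /e -mulnA dvdn_mull.
Qed.

Lemma U_nz (u : F) : u \in U -> u != 0.
Proof. by rewrite inE; apply: contraTneq => ->; rewrite expr0n eq_sym oner_eq0. Qed.

Lemma U_sign (u : F) : u \in U -> u ^+ m = 1 \/ u ^+ m = -1.
Proof.
by rewrite inE succq_double exprM sqrf_eq1 => /orP[/eqP|/eqP]; [left|right].
Qed.

(* For u in U and s != 0 the norm x ^ (q + 1) restricted to the line u + K s
   is a quadratic in t with roots 0 and second u s. *)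
Let second (u s : F) := - (u^-1 * s + s ^+ q * u) / (s ^+ q * s).

Lemma norm_on_line (u s t : F) : u \in U -> s != 0 -> t \in K ->
  (u + t * s) ^+ q.+1 = 1 + t * (s ^+ q * s) * (t - second u s).
Proof.
move=> u_U s_nz; rewrite inE => /eqP t_K.
have u_nz := U_nz u_U; rewrite inE in u_U.
have uq : u ^+ q = u^-1 by apply: (mulIf u_nz); rewrite -exprSr (eqP u_U) mulVf.
rewrite exprS frobD exprMn t_K uq /second; field.
by rewrite s_nz expf_neq0.
Qed.

Lemma second_in_K (u s : F) : u \in U -> s != 0 -> second u s \in K.
Proof.
move=> u_U s_nz; have u_nz := U_nz u_U; rewrite inE in u_U.
have uq : u ^+ q = u^-1 by apply: (mulIf u_nz); rewrite -exprSr (eqP u_U) mulVf.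
rewrite inE /second; apply/eqP.
rewrite !exprMn frobN !exprVn frobD !exprMn !frobK exprVn uq invrK.
by field; rewrite s_nz expf_neq0.
Qed.

Lemma second_sign (u s : F) : u \in U -> s != 0 -> chi s * (-1) ^+ m = -1 ->
  (u + second u s * s) ^+ m = - u ^+ m.
Proof.
move=> u_U s_nz chi_s; have u_nz := U_nz u_U.
have -> : u + second u s * s = (-1) * s / (u * s ^+ q).
  by rewrite /second; field; rewrite u_nz s_nz expf_neq0.
have sgn2 : (-1) ^+ m * (-1) ^+ m = 1 :> F by rewrite -exprMn mulrNN mulr1 expr1n.
have um2 : u ^+ m * u ^+ m = 1 by case: (U_sign u_U) => ->; rewrite ?mulrNN mulr1.
have sqm : (s ^+ q) ^+ m = s ^+ m * chi s.
  by rewrite -!exprM -exprD /e; congr (_ ^+ _); have := q_gt0; nia.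
have chi_s' : chi s = - (-1) ^+ m.
  by apply: (mulIf (_ : (-1) ^+ m != 0)); rewrite ?chi_s ?mulNr ?sgn2 ?signr_eq0.
rewrite !exprMn exprVn exprMn sqm chi_s'.
have D_nz : u ^+ m * (s ^+ m * - (-1) ^+ m) != 0.
  by rewrite !mulf_neq0 ?expf_neq0 ?oppr_eq0 ?signr_eq0.
apply: (mulIf D_nz); rewrite mulfVK //.
by transitivity (u ^+ m * u ^+ m * ((-1) ^+ m * s ^+ m)); [rewrite um2 mul1r | ring].
Qed.

Variable R : realType.

Let sgnU (x : F) : R := if x \in U then (if x ^+ m == 1 then 1 else -1) else 0.

(* A line in a direction s with chi s * (-1) ^ m = -1 meets U in either no point
   or two points of opposite signs, so sgnU sums to 0 along it. *)
Lemma circle_line_sum0 (v s : F) : s != 0 -> chi s * (-1) ^+ m = -1 ->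
  \sum_(t in K) sgnU (v + t * s) = 0.
Proof.
move=> s_nz chi_s; have m1_neq1 : (-1 : F) != 1 by rewrite eq_sym one_neq_m1.
case: (pickP [pred t | (t \in K) && (v + t * s \in U)]) => [t0|none]; last first.
  by apply: big1 => t t_K; rewrite /sgnU; move: (none t); rewrite /= t_K /= => ->.
move=> /andP [t0_K]; set u := v + t0 * s => u_U.
have -> : \sum_(t in K) sgnU (v + t * s) = \sum_(t in K) sgnU (u + t * s).
  rewrite (reindex_inj (addIr t0)) /=.
  by apply: eq_big => [t|t _]; [rewrite mem_KD | congr sgnU; rewrite /u; ring].
have t1_sgn := second_sign u_U s_nz chi_s.
have t1_nz : second u s != 0.
  apply/eqP => t1_0; move: t1_sgn; rewrite t1_0 mul0r addr0.
  by case: (U_sign u_U) => ->; rewrite ?opprK => /eqP;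
    rewrite ?(negbTE one_neq_m1) ?(negbTE m1_neq1).
rewrite (bigD1 (0 : F)) ?mem_K0 //= (bigD1 (second u s)) /=; last first.
  by rewrite second_in_K.
rewrite big1 => [|t /andP [/andP [t_K t_nz] t_t1]]; last first.
  rewrite /sgnU inE norm_on_line // -subr_eq0 addrC addKr !mulf_eq0.
  by rewrite (negbTE t_nz) (negbTE s_nz) (negbTE (expf_neq0 _ s_nz)) subr_eq0 (negbTE t_t1).
have t1_U : u + second u s * s \in U.
  by rewrite inE norm_on_line ?second_in_K // subrr mulr0 addr0.
rewrite mul0r !addr0 /sgnU u_U t1_U t1_sgn.
by case: (U_sign u_U) => ->; rewrite ?opprK eqxx ?(negbTE m1_neq1) ?addrN ?addNr.
Qed.

(* Lines through v: let T be a set of directions stable under F_q^*, so that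
   v - T is a union of punctured lines v + K s.  If f sums to 0 on every line
   v + K s with s in T, each punctured line contributes -f v, and every point of
   v - T lies on q - 1 of the lines indexed by T. *)
Lemma sum_over_directions (f : F -> R) (T : {set F}) :
  (forall t s, t \in K -> t != 0 -> s \in T -> t * s \in T) ->
  (forall v s, s \in T -> \sum_(t in K) f (v + t * s) = 0) ->
  forall v, (\sum_(s in T) f (v - s)) * (q.-1)%:R = - (#|T|%:R) * f v.
Proof.
move=> T_stable line0 v.
have card_K1 : #|K :\ 0| = q.-1.
  by move: (cardsD1 (0 : F) K); rewrite mem_K0 card_K => ->.
have scale t : t \in K :\ 0 ->
    \sum_(s in T) f (v - s) = \sum_(s in T) f (v - t * s).
  rewrite in_setD1 => /andP [t_nz t_K].
  rewrite (reindex_inj (mulfI t_nz)) /=; apply: eq_bigl => s.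
  apply/idP/idP => [ts_T|]; last exact: T_stable.
  by rewrite -(mulKf t_nz s) T_stable ?mem_KV ?invr_eq0.
rewrite -card_K1 mulr_natr -sumr_const (eq_bigr _ scale) exchange_big /=.
rewrite mulNr mulr_natl -sumr_const -sumrN; apply: eq_bigr => s s_T.
have ms_T : - s \in T by rewrite -mulN1r T_stable ?mem_Km1 ?oppr_eq0 ?oner_eq0.
have := line0 v (- s) ms_T; rewrite (bigD1 (0 : F)) ?mem_K0 //= mul0r addr0 => sum0.
apply: (addrI (f v)); rewrite subrr -[RHS]sum0; congr (_ + _).
by apply: eq_big => [t|t _]; [rewrite in_setD1 andbC | rewrite mulrN].
Qed.

Lemma sign_sum_directions (c : F) (T : {set F}) : c != 0 -> #|T| = e ->
  (forall t s, t \in K -> t != 0 -> s \in T -> t * s \in T) ->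
  (forall s, s \in T -> chi (c * s) * (-1) ^+ m = -1) ->
  forall v, \sum_(s in T) sgnU (c * (v - s)) = - m%:R * sgnU (c * v).
Proof.
move=> c_nz card_T T_stable T_sign v.
have line0 w s : s \in T -> \sum_(t in K) sgnU (c * (w + t * s)) = 0.
  move=> s_T; have cs_nz : c * s != 0.
    apply/eqP => cs0; move: (T_sign s s_T); rewrite cs0 chi0 mul0r => /eqP.
    by rewrite eq_sym oppr_eq0 oner_eq0.
  rewrite -[RHS](circle_line_sum0 (c * w) cs_nz (T_sign s s_T)).
  by apply: eq_bigr => t _; rewrite mulrDr mulrCA.
have q1_nz : (q.-1)%:R != 0 :> R by rewrite pnatr_eq0; have := q_gt1; lia.
apply: (mulIf q1_nz).
have := sum_over_directions (f := fun x => sgnU (c * x)) T_stable line0 v.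
by rewrite /= card_T natrM => ->; ring.
Qed.

(* If chi c * (-1) ^ m = -1, the squares are such directions: eigenvalue -m. *)
Lemma sign_eigen_neg (c : F) : c != 0 -> chi c * (-1) ^+ m = -1 ->
  forall v, \sum_(y | paley_adj v y) sgnU (c * y) = - m%:R * sgnU (c * v).
Proof.
move=> c_nz chi_c v; rewrite (paley_nbr_sum (fun y => sgnU (c * y))).
apply: sign_sum_directions => //; first exact: card_Sq.
  by move=> t s t_K t_nz; rewrite !inE exprMn (chi_K t_K t_nz) mul1r.
by move=> s; rewrite inE exprMn => /eqP ->; rewrite mulr1.
Qed.

(* If chi c * (-1) ^ m = 1, the non-squares are such directions; the sign
   function then sums to 0 over F, and the square directions give m - 1. *)
Lemma sign_eigen_pos (c : F) : c != 0 -> chi c * (-1) ^+ m = 1 ->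
  forall v, \sum_(y | paley_adj v y) sgnU (c * y) = (m%:R - 1) * sgnU (c * v).
Proof.
move=> c_nz chi_c.
have nsq_sum v : \sum_(s in NSq) sgnU (c * (v - s)) = - m%:R * sgnU (c * v).
  apply: sign_sum_directions => //; first exact: card_NSq.
    move=> t s t_K t_nz; rewrite !inE => /andP [s_nz chi_s].
    by rewrite mulf_neq0 // exprMn (chi_K t_K t_nz) mul1r.
  move=> s; rewrite inE => /andP [s_nz chi_s].
  have chi_s' : chi s = -1.
    by case: (chi_sign s_nz) => // chi_s1; rewrite chi_s1 eqxx in chi_s.
  by rewrite exprMn chi_s' mulrN1 mulNr chi_c.
have total0 : \sum_x sgnU (c * x) = 0.
  apply: (cayley_eigenfunction_sum0 (S := NSq) (lam := - m%:R)) => //.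
  rewrite card_NSq -subr_eq0 -opprD oppr_eq0 -natrD pnatr_eq0.
  by have := succq_double; lia.
move=> v; rewrite (paley_nbr_sum (fun y => sgnU (c * y))).
have sum0 : \sum_s sgnU (c * (v - s)) = 0.
  by rewrite -[RHS]total0 [RHS](reindex_inj (subrI v)).
have := sum_split_chi (fun y => sgnU (c * y)) v; rewrite /= nsq_sum sum0.
set a := sgnU (c * v); set X := \sum_(s in Sq) _ => split_eq.
transitivity (a + X + - m%:R * a - (a - m%:R * a)); first by ring.
by rewrite -split_eq; ring.
Qed.

Lemma sign_nonzero (c : F) : c != 0 -> exists x, sgnU (c * x) != 0.
Proof.
move=> c_nz; exists c^-1; rewrite mulfV // /sgnU inE !expr1n eqxx.
exact: oner_neq0.
Qed.

(* The support of x |-> sgnU (c x) is c^-1 U, of size q + 1. *)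
Lemma card_supp_sign (c : F) : c != 0 -> #|supp (fun x => sgnU (c * x))| = q.+1.
Proof.
move=> c_nz.
have -> : supp (fun x => sgnU (c * x)) = [set c^-1 * u | u in U].
  apply/setP => x; rewrite /supp inE /sgnU; apply/idP/imsetP => [|[u u_U ->]].
    by case: ifP => [cx_U _|_ /eqP //]; exists (c * x); rewrite ?mulKf.
  by rewrite mulVKf // u_U; case: ifP => _; rewrite ?oppr_eq0 oner_eq0.
by rewrite card_imset ?card_U //; apply: mulfI; rewrite invr_neq0.
Qed.

Lemma q_real : q%:R = m%:R * 2 - 1 :> R.
Proof. by rewrite -natrM -succq_double -natr1 addrK. Qed.

(* Existence: choose c with chi c = (-1) ^ m for the eigenvalue m - 1, and
   chi c = - (-1) ^ m for the eigenvalue - m. *)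
Lemma paley_min_eigenfunction (lam : R) :
  lam = (q%:R - 1) / 2 \/ lam = (- 1 - q%:R) / 2 ->
  exists f : F -> R, paley_eigenfunction lam f /\ #|supp f| = q.+1.
Proof.
have sgn_m : (-1 : F) ^+ m = 1 \/ (-1 : F) ^+ m = -1.
  by rewrite -[(-1 : F) ^+ m]signr_odd; case: (odd m); rewrite ?expr1 ?expr0; [right|left].
have sgn2 : (-1 : F) ^+ m * (-1) ^+ m = 1 by rewrite -exprMn mulrNN mulr1 expr1n.
have sign_eigenfunction c : c != 0 -> (forall v,
    \sum_(y | paley_adj v y) sgnU (c * y) = lam * sgnU (c * v)) ->
    exists f : F -> R, paley_eigenfunction lam f /\ #|supp f| = q.+1.
  by move=> c_nz eig; exists (fun x => sgnU (c * x)); do !split;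
    [exact: sign_nonzero | exact: eig | exact: card_supp_sign].
rewrite q_real => -[lam_eq|lam_eq].
  have [c c_nz chi_c] := chi_onto sgn_m; apply: (sign_eigenfunction c c_nz) => v.
  by rewrite (sign_eigen_pos c_nz) ?chi_c // lam_eq; congr (_ * _); field.
have [c c_nz chi_c] : exists2 c : F, c != 0 & chi c = - (-1) ^+ m.
  by apply: chi_onto; case: sgn_m => ->; rewrite ?opprK; [right|left].
apply: (sign_eigenfunction c c_nz) => v.
rewrite (sign_eigen_neg c_nz) ?lam_eq; last by rewrite chi_c mulNr sgn2.
by congr (_ * _); field.
Qed.

(* Lower bound: P(q^2) is loopless and lam is not its degree e, so the
   general support bound applies, and |lam| + |1 + lam| = q. *)
Lemma paley_eigenfunction_support (lam : R) (f : F -> R) :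
  lam = (q%:R - 1) / 2 \/ lam = (- 1 - q%:R) / 2 ->
  paley_eigenfunction lam f -> (q.+1 <= #|supp f|)%N.
Proof.
have m_ge1 : (1 : R) <= m%:R by rewrite ler1n; have := succq_double; lia.
have q1_ge1 : (1 : R) <= q.-1%:R by rewrite ler1n; have := q_gt1; lia.
rewrite q_real => lam_eq [f_nz eig].
apply: (eigenfunction_support_bound (adj := paley_adj (F:=F))) => //.
- by move=> x; rewrite /paley_adj eqxx.
- apply: (cayley_eigenfunction_sum0 (S := Sq) (lam := lam)) => [v|].
    by rewrite -paley_nbr_sum eig.
  rewrite card_Sq /e natrM; apply/eqP => lam_e.
  by case: lam_eq => lam_eq; rewrite lam_eq in lam_e; nra.
- rewrite q_real; case: lam_eq => ->.
    by rewrite !ger0_norm; lra.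
  by rewrite !ler0_norm; lra.
Qed.

End PaleyField.

Unset Implicit Arguments.

Theorem mainTheorem7 (R : realType) (q : nat) (F : finFieldType)
  (hq : odd_prime_power q) (hF : #|F| = (q ^ 2)%N) (lam : R)
  (hlam : lam = (q%:R - 1) / 2 \/ lam = (- 1 - q%:R) / 2) :
  (exists f : F -> R, paley_eigenfunction lam f /\ #|supp f| = q.+1) /\
  (forall f : F -> R, paley_eigenfunction lam f -> (q.+1 <= #|supp f|)%N).
Proof.
split; first exact: (paley_min_eigenfunction hq hF hlam).
by move=> f; apply: (paley_eigenfunction_support hq hF hlam).
Qed.
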